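(* In the setting of the context, for all triples $(T,L,v)\in\{1,\ldots,L\}\times\mathbb N_+\times[0.5,1)$ and any $u_{\mathrm{cut}}\in\{1,\ldots,p-1\}$, $$V^+_{T,L}(v,\rho_{\mathrm{thr}}(u_{\mathrm{cut}}+1))\ge V^+_{T,L}(v,\rho_{\mathrm{thr}}(u_{\mathrm{cut}})).$$
   Context: Data: $\boldsymbol X=[\boldsymbol x_1\cdots\boldsymbol x_p]\in\mathbb R^{n\times p}$ with standardized columns, $\boldsymbol y\in\mathbb R^n$; an unknown active set $\mathcal A\subseteq\{1,\ldots,p\}$, the remaining variables being null. T-Rex framework: fix $K,L\ge1$, $T\in\{1,\ldots,L\}$; for $k=1,\ldots,K$ append a dummy matrix $\mathring{\boldsymbol X}_k\in\mathbb R^{n\times L}$ (i.i.d. entries from a univariate distribution with finite mean and variance), run a forward selection method (at most one variable per iteration) on $(\boldsymbol y,[\boldsymbol X\ \mathring{\boldsymbol X}_k])$ and terminate once $T$ dummies are included; $\mathcal C_{k,L}(T)$ = original variables included before termination; $\Phi_{T,L}(j)=\frac1K\sum_k\mathbb 1\{j\in\mathcal C_{k,L}(T)\}$. Dendrogram groups: with $\rho_{j,j'}=\boldsymbol x_j^\top\boldsymbol x_{j'}$, agglomerative hierarchical clustering with distance $1-|\rho|$ (single, complete, or average linkage) gives merge heights $c_1\ge\cdots\ge c_{p-1}$; set $c_0=1$, $c_p=0$, $\rho_{\mathrm{thr}}(u)=1-c_u$ for $u=1,\ldots,p$; $\mathrm{Gr}(j,\rho_{\mathrm{thr}}(u_{\mathrm{cut}}))$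 is the set of $j'\neq j$ in the same cluster as $j$ when the dendrogram is cut at distance $1-\rho_{\mathrm{thr}}(u_{\mathrm{cut}})$. Define $\Psi^+_{T,L}(j,\rho)=\big(2-\min_{j'\in\mathrm{Gr}(j,\rho)}|\Phi_{T,L}(j)-\Phi_{T,L}(j')|\big)^{-1}$ if $\mathrm{Gr}(j,\rho)\ne\varnothing$ and $\Psi^+_{T,L}(j,\rho)=1$ otherwise, and $$V^+_{T,L}(v,\rho)=\big|\{\text{null } j:\Psi^+_{T,L}(j,\rho)\cdot\Phi_{T,L}(j)>v\}\big|.$$ *)

From HB Require Import structures.
From mathcomp Require Import all_boot all_order all_algebra.
Set Implicit Arguments. Unset Strict Implicit. Unset Printing Implicit Defensive.
Import Order.TTheory GRing.Theory Num.Theory.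
Local Open Scope ring_scope.

Section TRex.
Variable R : realFieldType.

Definition fmax (T : finType) (S : {set T}) (f : T -> R) : R :=
  \big[Order.max/0]_(i in S) f i.

(* exact minimum of f over a finite set S (meaningful when S is nonempty):
   the seed fmax S f is >= every f i, so it never wins on a nonempty S *)
Definition fmin (T : finType) (S : {set T}) (f : T -> R) : R :=
  \big[Order.min/fmax S f]_(i in S) f i.

Variables (n p : nat).

Definition rho (X : 'M[R]_(n, p)) (j j' : 'I_p) : R := \sum_(i < n) X i j * X i j'.

(* standardized columns: centered with unit Euclidean norm, so that
   x_j^T x_j' is the sample correlation *)
Definition standardized (X : 'M[R]_(n, p)) : Prop :=
  forall j : 'I_p, \sum_(i < n) X i j = 0 /\ rho X j j = 1.

Inductive linkage := Single | Complete | Average.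

Definition dist (X : 'M[R]_(n, p)) (j j' : 'I_p) : R := 1 - `|rho X j j'|.

Definition link (lk : linkage) (X : 'M[R]_(n, p)) (A B : {set 'I_p}) : R :=
  match lk with
  | Single => fmin (setX A B) (fun q => dist X q.1 q.2)
  | Complete => fmax (setX A B) (fun q => dist X q.1 q.2)
  | Average => (\sum_(q in setX A B) dist X q.1 q.2) / (#|A| * #|B|)%:R
  end.

(* parts i = the partition after i merges, h i = height of the i-th merge
   (i = 1 .. p-1); each step merges two distinct clusters of minimal linkage *)
Definition agglo_run (lk : linkage) (X : 'M[R]_(n, p))
    (parts : nat -> {set {set 'I_p}}) (h : nat -> R) : Prop :=
  parts 0%N = [set [set j] | j : 'I_p] /\
  forall i : nat, (i < p.-1)%N ->
    exists A B : {set 'I_p},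
      [/\ [&& A \in parts i, B \in parts i & A != B],
          (forall A' B', A' \in parts i -> B' \in parts i -> A' != B' ->
             link lk X A B <= link lk X A' B'),
          parts i.+1 = (A :|: B) |: ((parts i :\ A) :\ B)
        & h i.+1 = link lk X A B].

(* merge heights sorted decreasingly: c_1 >= ... >= c_{p-1}; c_0 = 1, c_p = 0 *)
Definition heights (h : nat -> R) : seq R := [seq h i.+1 | i <- iota 0 p.-1].

Definition cval (h : nat -> R) (u : nat) : R :=
  if u == 0%N then 1
  else if (p <= u)%N then 0
  else nth 0 (sort (fun a b => b <= a) (heights h)) u.-1.

Definition rho_thr (h : nat -> R) (u : nat) : R := 1 - cval h u.

(* cutting the dendrogram at distance t: perform all merges of height <= t *)
Definition same_cluster (parts : nat -> {set {set 'I_p}}) (h : nat -> R)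
    (t : R) (j j' : 'I_p) : bool :=
  (* the number i of merges performed ranges over 0 .. p-1, i.e. over 'I_p *)
  [exists i : 'I_p,
     [forall i' : 'I_p, ((1 <= i') && (i' <= i))%N ==> (h i' <= t)] &&
     [exists B in parts i, (j \in B) && (j' \in B)]].

Definition Gr (parts : nat -> {set {set 'I_p}}) (h : nat -> R)
    (j : 'I_p) (r : R) : {set 'I_p} :=
  [set j' | (j' != j) && same_cluster parts h (1 - r) j j'].

Variable K : nat.

(* Phi_{T,L}(j) = (1/K) sum_k 1{j in C_{k,L}(T)} ; C T L k = C_{k,L}(T) *)
Definition Phi (C : nat -> nat -> 'I_K -> {set 'I_p}) (T L : nat) (j : 'I_p) : R :=
  K%:R^-1 * \sum_(k < K) (j \in C T L k)%:R.

Definition Psi_plus (C : nat -> nat -> 'I_K -> {set 'I_p})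
    (parts : nat -> {set {set 'I_p}}) (h : nat -> R) (T L : nat)
    (j : 'I_p) (r : R) : R :=
  let G := Gr parts h j r in
  if G == set0 then 1
  else (2 - fmin G (fun j' => `|Phi C T L j - Phi C T L j'|))^-1.

Definition V_plus (A : {set 'I_p}) (C : nat -> nat -> 'I_K -> {set 'I_p})
    (parts : nat -> {set {set 'I_p}}) (h : nat -> R) (T L : nat) (v r : R) : nat :=
  #|[set j | (j \notin A) && (v < Psi_plus C parts h T L j r * Phi C T L j)]|.

End TRex.

From Pilot Require Import Defs.
From HB Require Import structures.
From mathcomp Require Import all_boot all_order all_algebra.
From mathcomp Require Import ring lra zify.
Import Order.TTheory GRing.Theory Num.Theory.
Local Open Scope ring_scope.

(* Raising [u_cut] lowers the cut height [c_u] (the merge heights are sorted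
   decreasingly, and [c_p = 0] is still below [c_(p-1)] because every merge
   height is a linkage of distances [1 - |rho| >= 0]).  Cutting lower performs
   fewer merges, so each group [Gr(j, rho)] shrinks; the minimum of
   [|Phi j - Phi j'|] over a smaller group is larger, hence [Psi+] grows (an
   empty group gives [Psi+ = 1], the largest possible value since
   [|Phi j - Phi j'| <= 1]).  So every null variable counted at the coarser
   cut is still counted at the finer one. *)

Section FiniteExtrema.
Context {R : realFieldType} {T : finType}.
Implicit Types (S : {set T}) (f : T -> R).


Lemma fmax_ge0 S f : 0 <= fmax S f.
Proof. by rewrite /fmax; elim/big_rec: _ => //= i x _ x_ge0; rewrite le_max x_ge0 orbT. Qed.

Lemma le_fmax {S f i} : i \in S -> f i <= fmax S f.
Proof. by move=> iS; rewrite /fmax (bigD1 i) //= le_max lexx. Qed.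

Lemma fmin_le {S} f {i} : i \in S -> fmin S f <= f i.
Proof. by move=> iS; rewrite /fmin (bigD1 i) //= ge_min lexx. Qed.

Lemma fmin_ge S f m :
  (forall i, i \in S -> m <= f i) -> m <= fmax S f -> m <= fmin S f.
Proof.
move=> m_lb m_le_max; rewrite /fmin.
by elim/big_ind: _ => //= x y mx my; rewrite le_min mx.
Qed.

Lemma fmin_ge0 S f : (forall i, i \in S -> 0 <= f i) -> 0 <= fmin S f.
Proof. by move=> f_ge0; apply: fmin_ge => //; apply: fmax_ge0. Qed.

Lemma fmin_subset S S' f : S' \subset S -> S' != set0 -> fmin S f <= fmin S' f.
Proof.
move=> sub /set0Pn[i0 i0S']; apply: fmin_ge => [i iS'|].
  exact/fmin_le/(subsetP sub).
by apply: le_trans (le_fmax i0S'); apply/fmin_le/(subsetP sub).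
Qed.

End FiniteExtrema.

Section Correlation.
Context {R : realFieldType}.

(* Expand [0 <= sum (a_i -+ b_i)^2] using the two unit norms. *)
Lemma unit_dot_norm_le1 n (a b : 'I_n -> R) :
  \sum_i a i * a i = 1 -> \sum_i b i * b i = 1 -> `|\sum_i a i * b i| <= 1.
Proof.
move=> a1 b1.
have sq_sum s : \sum_i (a i + s * b i) ^+ 2
    = \sum_i a i * a i + 2 * s * \sum_i a i * b i + s ^+ 2 * \sum_i b i * b i.
  by rewrite !mulr_sumr -!big_split /=; apply: eq_bigr => i _; ring.
have sq_ge0 s : 0 <= \sum_i (a i + s * b i) ^+ 2.
  by apply: sumr_ge0 => i _; apply: sqr_ge0.
have := sq_ge0 1; have := sq_ge0 (-1); rewrite !sq_sum a1 b1.
by rewrite ler_norml; lra.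
Qed.

Context {n p : nat} {X : 'M[R]_(n, p)}.
Hypothesis X_std : standardized X.

Lemma dist_ge0 j j' : 0 <= dist X j j'.
Proof.
rewrite /dist subr_ge0; apply: unit_dot_norm_le1.
- by have [_] := X_std j.
- by have [_] := X_std j'.
Qed.

Lemma link_ge0 lk A B : 0 <= link lk X A B.
Proof.
case: lk => /=.
- by apply: fmin_ge0 => q _; apply: dist_ge0.
- exact: fmax_ge0.
- by apply: divr_ge0; [apply: sumr_ge0 => q _; apply: dist_ge0 | apply: ler0n].
Qed.

Lemma agglo_run_height_ge0 {lk parts h} :
  agglo_run lk X parts h -> forall i, (i < p.-1)%N -> 0 <= h i.+1.
Proof. by move=> [_ run] i ip; have [A [B [_ _ _ ->]]] := run i ip; apply: link_ge0. Qed.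

End Correlation.

Section CutLevels.
Variables (R : realFieldType) (p : nat) (h : nat -> R).
Hypothesis h_ge0 : forall i, (i < p.-1)%N -> 0 <= h i.+1.

Lemma cval_succ_le u : (1 <= u <= p.-1)%N -> cval p h u.+1 <= cval p h u.
Proof.
move=> /andP[u_ge1 u_le]; rewrite /cval /=; set s := sort _ _.
have size_s : size s = p.-1 by rewrite size_sort size_map size_iota.
have s_ge0 x : x \in s -> 0 <= x.
  by rewrite mem_sort => /mapP[i]; rewrite mem_iota add0n => /andP[_ /h_ge0] ? ->.
have -> : (u == 0)%N = false by apply/eqP; lia.
have -> : (p <= u)%N = false by apply/negbTE; rewrite -ltnNge; lia.
case: ifP => [_|/negbT p_gt_u1]; first by apply/s_ge0/mem_nth; rewrite size_s; lia.
have ge_trans : transitive (fun a b : R => b <= a).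
  by move=> x y z /= yx zy; apply: le_trans yx.
have ge_total : total (fun a b : R => b <= a) by move=> x y; apply: le_total.
by apply: (sorted_ltn_nth ge_trans 0 (sort_sorted ge_total _)); rewrite ?inE -/s ?size_s; lia.
Qed.

Lemma rho_thr_le_succ u : (1 <= u <= p.-1)%N -> rho_thr p h u <= rho_thr p h u.+1.
Proof. by move=> /cval_succ_le; rewrite /rho_thr lerD2l lerN2. Qed.

End CutLevels.

Lemma Gr_subset {R : realFieldType} {p} (parts : nat -> {set {set 'I_p}})
    (h : nat -> R) j (r r' : R) :
  r <= r' -> Gr parts h j r' \subset Gr parts h j r.
Proof.
move=> le_rr'; apply/subsetP => x; rewrite !inE => /andP[-> /existsP[i /andP[]]].
move=> /forallP low_merges same_block /=; apply/existsP; exists i.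
rewrite same_block andbT; apply/forallP => i'; apply/implyP.
by move=> /(implyP (low_merges i')) /le_trans; apply; rewrite lerD2l lerN2.
Qed.

Section TRexScores.
Variables (R : realFieldType) (p K : nat) (C : nat -> nat -> 'I_K -> {set 'I_p}).
Variables (T L : nat).

Let Phi := Phi R C T L.

Lemma Phi_ge0 j : 0 <= Phi j.
Proof.
by apply: mulr_ge0; [rewrite invr_ge0 ler0n | apply: sumr_ge0 => k _; apply: ler0n].
Qed.

(* No [0 < K] needed: for [K = 0] the junk inverse [0^-1 = 0] makes [Phi] vanish. *)
Lemma Phi_le1 j : Phi j <= 1.
Proof.
rewrite /Phi /Defs.Phi.
have sum_le_K : \sum_(k < K) ((j \in C T L k)%:R : R) <= K%:R.
  by rewrite -[K in X in _ <= X]card_ord -sumr_const; apply: ler_sum => k _; case: (_ \in _).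
have [->|K_neq0] := eqVneq (K%:R : R) 0; first by rewrite invr0 mul0r ler01.
apply: le_trans (ler_wpM2l _ sum_le_K) _; first by rewrite invr_ge0 ler0n.
by rewrite mulVf.
Qed.

Lemma Phi_dist_le1 j j' : `|Phi j - Phi j'| <= 1.
Proof.
have := Phi_ge0 j; have := Phi_le1 j; have := Phi_ge0 j'; have := Phi_le1 j'.
by rewrite ler_norml; lra.
Qed.

Lemma Psi_plus_le parts h j (r r' : R) :
  r <= r' -> Psi_plus C parts h T L j r <= Psi_plus C parts h T L j r'.
Proof.
move=> /(Gr_subset parts h j) sub; rewrite /Psi_plus.
set G := Gr _ _ _ r; set G' := Gr _ _ _ r'; set f := fun j' => _.
have f_le1 j' : f j' <= 1 by apply: Phi_dist_le1.
have [G'0|/set0Pn[i0 i0G']] := eqVneq G' set0.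
  have [//|/set0Pn[i0 i0G]] := eqVneq G set0.
  have := fmin_le f i0G; have := f_le1 i0 => f_i0_le1 min_le.
  by rewrite invf_le1; lra.
have -> : G == set0 = false by apply/set0Pn; exists i0; apply: (subsetP sub).
have le_min : fmin G f <= fmin G' f by apply: fmin_subset => //; apply/set0Pn; exists i0.
have := fmin_le f i0G'; have := f_le1 i0 => f_i0_le1 min_le'.
by rewrite lef_pV2 ?posrE; lra.
Qed.

Lemma V_plus_le A parts h (v r r' : R) :
  r <= r' -> (V_plus A C parts h T L v r <= V_plus A C parts h T L v r')%N.
Proof.
move=> le_rr'; apply/subset_leq_card/subsetP => j; rewrite !inE => /andP[-> /=].
by move=> /lt_le_trans; apply; apply/ler_wpM2r/Psi_plus_le; first exact: Phi_ge0.
Qed.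

End TRexScores.

Theorem lemma2 (R : realFieldType) (n p K : nat)
    (X : 'M[R]_(n, p)) (y : 'cV[R]_n) (A : {set 'I_p})
    (C : nat -> nat -> 'I_K -> {set 'I_p})
    (lk : linkage) (parts : nat -> {set {set 'I_p}}) (h : nat -> R) :
  standardized X ->
  (1 <= K)%N ->
  agglo_run lk X parts h ->
  forall (T L : nat) (v : R) (u_cut : nat),
    (1 <= T <= L)%N -> (1 <= L)%N ->
    1 / 2 <= v -> v < 1 ->
    (1 <= u_cut <= p.-1)%N ->
    (V_plus A C parts h T L v (rho_thr p h u_cut)
       <= V_plus A C parts h T L v (rho_thr p h u_cut.+1))%N.
Proof.
(* Only standardization and the agglomerative run matter. *)
move=> X_std _ run T L v u _ _ _ _ u_range.
apply/V_plus_le/rho_thr_le_succ/u_range.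
move=> i; exact: (agglo_run_height_ge0 X_std run i).
Qed.
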